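(* Let $d\in\{1,2,3,4,7\}$ and let $Q_d$, $R_d$, $\beta_d$ be as in the context. For a positive integer $h$ define $$\mathscr{T}_{d,h}=c_d\prod_{p\in R_d}W_{d,p}(h)\prod_{\substack{p\in Q_d\\ p\mid h}}\frac{1-p^{-(m_p(h)+1)}}{1-p^{-1}},$$ with $c_1=2$, $c_2=2\sqrt2$, $c_3=\frac{2}{\sqrt3}$, $c_4=2$, $c_7=\frac{2\sqrt7}{3}$, and $W_{1,2}(h)=\frac14$ if $m_2(h)=0$, $=\frac{2^{m_2(h)+1}-3}{2^{m_2(h)+2}}$ if $m_2(h)\ge1$; $W_{2,2}(h)=\frac14$ if $m_2(h)\in\{0,1\}$, $=\frac{2^{m_2(h)}-3}{2^{m_2(h)+1}}$ if $m_2(h)\ge2$; $W_{3,3}(h)=\frac12\cdot\frac{3^{m_3(h)+1}-2}{3^{m_3(h)+1}}$; $W_{4,2}(h)=\frac18,\,0,\,\frac{5}{16}$ for $m_2(h)=0,1,2$ respectively, and $=\frac{3\cdot2^{m_2(h)-1}-3}{2^{m_2(h)+2}}$ if $m_2(h)\ge3$; $W_{7,2}(h)=\frac12$ if $m_2(h)\in\{0,1\}$, $=\frac34$ if $m_2(h)\ge2$; $W_{7,7}(h)=\frac12\cdot\frac{7^{m_7(h)+1}-4}{7^{m_7(h)+1}}$. Then for every $\varepsilon>0$, as $H\to\infty$, $$\sum_{\substack{1\le d_1,d_2\le H\\ d_1\ne d_2}}\mathscr{T}_{d,|d_2-d_1|}=2\sum_{1\le h\le H-1}(H-h)\,\ma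thscr{T}_{d,h}=\beta_d^2H^2+O_\varepsilon(H^{1+\varepsilon}).$$
   Context: $m_p(h)$ is the exponent of the prime $p$ in $h$. Sets of primes: $Q_1=Q_4=\{p\equiv3\ (4)\}$, $Q_2=\{p\equiv5,7\ (8)\}$, $Q_3=\{p\equiv2\ (3)\}$ (including $2$), $Q_7=\{p\equiv3,5,6\ (7)\}$; $R_1=R_2=R_4=\{2\}$, $R_3=\{3\}$, $R_7=\{2,7\}$. The constant $\beta_d$ is $\beta_d=\delta_d\, g_d\left(\frac{2|d|\,L_d(1)}{\pi\,\varphi(2|d|)}\right)^{1/2}$ with $g_d=\prod_{p\in Q_d,\ p\ \mathrm{odd}}(1-p^{-2})^{-1/2}$, $\delta_1=\delta_2=1$, $\delta_3=\tfrac23$, $\delta_4=\delta_7=\tfrac34$, $\varphi$ Euler's totient, and $L_d(1)=\frac{\pi}{4},\frac{\pi}{2\sqrt2},\frac{\pi}{2\sqrt3},\frac{\pi}{4},\frac{\pi}{2\sqrt7}$ for $d=1,2,3,4,7$. Thus $\beta_d^2=\kappa_d\prod_{p\in Q_d,\,p\text{ odd}}(1-p^{-2})^{-1}$ with $\kappa_1=\frac12,\ \kappa_2=\frac{1}{\sqrt2},\ \kappa_3=\frac49\cdot\frac{\sqrt3}{2},\ \kappa_4=\frac{9}{16}\cdot\frac12,\ \kappa_7=\frac{9}{16}\cdot\frac{\sqrt7}{6}$. $\mathscr{T}_{d,h}$ is the conjectural pair-correlation singular series for integers of the form $x^2+dy^2$. *)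

From Stdlib Require Import Reals.
From mathcomp Require Import ssreflect ssrbool ssrnat div prime.

Open Scope R_scope.

Definition mp (p h : nat) : nat := logn p h.

(* membership in Q_d (only meaningful for p prime) *)
Definition inQ (d p : nat) : bool :=
  match d with
  | 1%nat | 4%nat => (eqn (p %% 4)%nat 3)
  | 2%nat => (eqn (p %% 8)%nat 5 || eqn (p %% 8)%nat 7)
  | 3%nat => (eqn (p %% 3)%nat 2)
  | 7%nat => [|| (eqn (p %% 7)%nat 3), (eqn (p %% 7)%nat 5) | (eqn (p %% 7)%nat 6)]
  | _ => false
  end.

Fixpoint prodR (f : nat -> R) (n : nat) : R :=
  match n with
  | O => 1
  | S k => prodR f k * f (S k)
  end.

Fixpoint sumR (f : nat -> R) (n : nat) : R :=
  match n with
  | O => 0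
  | S k => sumR f k + f (S k)
  end.

Definition c_const (d : nat) : R :=
  match d with
  | 1%nat => 2
  | 2%nat => 2 * sqrt 2
  | 3%nat => 2 / sqrt 3
  | 4%nat => 2
  | 7%nat => 2 * sqrt 7 / 3
  | _ => 0
  end.

Definition W12 (h : nat) : R :=
  let m := mp 2 h in
  if eqn m 0 then / 4 else (2 ^ (m + 1) - 3) / 2 ^ (m + 2).

Definition W22 (h : nat) : R :=
  let m := mp 2 h in
  if (m <= 1)%nat then / 4 else (2 ^ m - 3) / 2 ^ (m + 1).

Definition W33 (h : nat) : R :=
  let m := mp 3 h in
  / 2 * ((3 ^ (m + 1) - 2) / 3 ^ (m + 1)).

Definition W42 (h : nat) : R :=
  let m := mp 2 h in
  match m with
  | 0%nat => / 8
  | 1%nat => 0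
  | 2%nat => 5 / 16
  | _ => (3 * 2 ^ (m - 1) - 3) / 2 ^ (m + 2)
  end.

Definition W72 (h : nat) : R :=
  let m := mp 2 h in
  if (m <= 1)%nat then / 2 else 3 / 4.

Definition W77 (h : nat) : R :=
  let m := mp 7 h in
  / 2 * ((7 ^ (m + 1) - 4) / 7 ^ (m + 1)).

(* prod_{p in R_d} W_{d,p}(h) *)
Definition Wprod (d h : nat) : R :=
  match d with
  | 1%nat => W12 h
  | 2%nat => W22 h
  | 3%nat => W33 h
  | 4%nat => W42 h
  | 7%nat => W72 h * W77 h
  | _ => 0
  end.

(* prod_{p in Q_d, p | h} (1 - p^{-(m_p(h)+1)}) / (1 - p^{-1});
   all such p satisfy p <= h for h >= 1 *)
Definition Qprod (d h : nat) : R :=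
  prodR (fun p =>
    if [&& prime p, inQ d p & (p %| h)%nat]
    then (1 - / INR p ^ (mp p h + 1)) / (1 - / INR p)
    else 1) h.

Definition Tsing (d h : nat) : R := c_const d * Wprod d h * Qprod d h.

Definition ndist (a b : nat) : nat := ((a - b) + (b - a))%nat.

Definition pair_sum (d H : nat) : R :=
  sumR (fun d1 => sumR (fun d2 =>
     if eqn d1 d2 then 0 else Tsing d (ndist d2 d1)) H) H.

Definition weighted_sum (d H : nat) : R :=
  2 * sumR (fun h => INR (H - h) * Tsing d h) (H - 1).

(* partial products of prod_{p in Q_d, p odd} (1 - p^{-2})^{-1} = g_d^2 *)
Definition g2_partial (d N : nat) : R :=
  prodR (fun p =>
    if [&& prime p, odd p & inQ d p] then / (1 - / INR p ^ 2) else 1) N.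

Definition delta_const (d : nat) : R :=
  match d with
  | 1%nat | 2%nat => 1
  | 3%nat => 2 / 3
  | 4%nat | 7%nat => 3 / 4
  | _ => 0
  end.

Definition L1 (d : nat) : R :=
  match d with
  | 1%nat => PI / 4
  | 2%nat => PI / (2 * sqrt 2)
  | 3%nat => PI / (2 * sqrt 3)
  | 4%nat => PI / 4
  | 7%nat => PI / (2 * sqrt 7)
  | _ => 0
  end.

(* beta_d = delta_d * g_d * sqrt(2|d| L_d(1) / (pi phi(2|d|))), with g_d = sqrt G
   where G = prod_{p in Q_d, p odd} (1-p^{-2})^{-1} *)
Definition beta (d : nat) (G : R) : R :=
  delta_const d * sqrt G
  * sqrt (2 * INR d * L1 d / (PI * INR (totient (2 * d)))).

(* Write T_{d,h} = c_d W_d(h) Q_d(h), where W_d = prod_{p in R_d} W_{d,p} only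
   depends on the valuations m_p(h), p in R_d, and Q_d(h) is the product over
   p in Q_d, p | h.  The proof has four steps.
   1. The pair sum equals 2 sum_{N < H} S(N), where S(N) = sum_{h <= N} T_{d,h};
      this is also the weighted sum 2 sum_h (H - h) T_{d,h}.
   2. W_d is a linear combination of 1, of indicators of 2^k | h and of
      geometric weights p^{-m_p(h)}, so sum_{h <= M} W_d(h) = w_d M + O(1).
   3. Q_d(h) = sum_{k | h} k^{-1} 1[k is a Q_d-number] and W_d is invariant
      under multiplication by Q_d-numbers, so by the hyperbola method
      S(N) = c_d w_d Z_d N + O(log N), where Z_d = sum_{k Q_d-number} k^{-2}.
      Summing over N gives the main term c_d w_d Z_d H^2 + O(H^{1+eps}).
   4. Z_d is the Euler product prod_{p in Q_d} (1 - p^{-2})^{-1}, which equals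
      g_d^2 up to the factor 4/3 at p = 2 when 2 is in Q_d (d = 3), and a
      direct computation gives c_d w_d Z_d = beta_d^2.
   Sums and products over [1, N] use the recursive sumR/prodR,
   bridged to MathComp's big operators where reindexing is needed. *)

From Stdlib Require Import Reals Lra Lia.
From mathcomp Require Import ssreflect ssrfun ssrbool eqtype ssrnat seq path div.
From mathcomp Require Import fintype bigop prime zify.
From HB Require Import structures.

Open Scope R_scope.

Lemma Rplus_associative : associative Rplus.
Proof. by move=> x y z; rewrite Rplus_assoc. Qed.
Lemma Rmult_associative : associative Rmult.
Proof. by move=> x y z; rewrite Rmult_assoc. Qed.
HB.instance Definition _ :=
  Monoid.isComLaw.Build R 0 Rplus Rplus_associative Rplus_comm Rplus_0_l.
HB.instance Definition _ :=
  Monoid.isComLaw.Build R 1 Rmult Rmult_associative Rmult_comm Rmult_1_l.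

Lemma sumR_big f N : sumR f N = \big[Rplus/0]_(1 <= i < N.+1) f i.
Proof. by elim: N => [|N IH] /=; [rewrite big_geq | rewrite big_nat_recr //= IH]. Qed.

Lemma prodR_big f N : prodR f N = \big[Rmult/1]_(1 <= i < N.+1) f i.
Proof. by elim: N => [|N IH] /=; [rewrite big_geq | rewrite big_nat_recr //= IH]. Qed.

Lemma sumR_ext f g N :
  (forall i, (1 <= i <= N)%nat -> f i = g i) -> sumR f N = sumR g N.
Proof. by move=> e; rewrite !sumR_big; apply: eq_big_nat => i hi; apply: e; lia. Qed.

Lemma prodR_ext f g N :
  (forall i, (1 <= i <= N)%nat -> f i = g i) -> prodR f N = prodR g N.
Proof. by move=> e; rewrite !prodR_big; apply: eq_big_nat => i hi; apply: e; lia. Qed.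

Lemma sumR_plus f g N : sumR (fun i => f i + g i) N = sumR f N + sumR g N.
Proof. elim: N => [|N IH] /=; [lra | rewrite IH; lra]. Qed.

Lemma sumR_minus f g N : sumR (fun i => f i - g i) N = sumR f N - sumR g N.
Proof. elim: N => [|N IH] /=; [lra | rewrite IH; lra]. Qed.

Lemma sumR_scal c f N : sumR (fun i => c * f i) N = c * sumR f N.
Proof. elim: N => [|N IH] /=; [lra | rewrite IH; lra]. Qed.

Lemma sumR_const c N : sumR (fun _ => c) N = c * INR N.
Proof. elim: N => [|N IH]; [simpl; lra | rewrite S_INR /= IH; lra]. Qed.

Lemma sumR_le f g N :
  (forall i, (1 <= i <= N)%nat -> f i <= g i) -> sumR f N <= sumR g N.
Proof.
elim: N => [|N IH] fg /=; first lra.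
have := fg N.+1; rewrite leqnn => /(_ isT).
have : sumR f N <= sumR g N by apply: IH => i hi; apply: fg; lia.
lra.
Qed.

Lemma sumR_abs f N : Rabs (sumR f N) <= sumR (fun i => Rabs (f i)) N.
Proof.
elim: N => [|N IH] /=; first by rewrite Rabs_R0; lra.
have := Rabs_triang (sumR f N) (f N.+1); lra.
Qed.

Lemma sumR_range_mono f N M :
  (N <= M)%nat -> (forall k, 0 <= f k) -> sumR f N <= sumR f M.
Proof.
move=> NM f0; elim: M NM => [|M IH] NM.
  have -> : N = 0%nat by lia.
  lra.
have [->|NM'] : N = M.+1 \/ (N <= M)%nat by lia.
  lra.
have := IH NM'; have := f0 M.+1; simpl; lra.
Qed.

Lemma sumR_exchange (f : nat -> nat -> R) N M :
  sumR (fun i => sumR (f i) M) N = sumR (fun j => sumR (fun i => f i j) N) M.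
Proof.
elim: N => [|N IH] /=; first by rewrite sumR_const; lra.
by rewrite IH -sumR_plus.
Qed.

Lemma sumR_rev f n : sumR (fun i => f (n.+1 - i)%nat) n = sumR f n.
Proof.
rewrite !sumR_big big_nat_rev; apply: eq_big_nat => i /andP[i1 iN].
congr f; lia.
Qed.

Lemma sumR_multiples k (G : nat -> R) N : (0 < k)%nat ->
  sumR (fun h => if (k %| h)%nat then G h else 0) N =
  sumR (fun j => G (k * j)%nat) (N %/ k).
Proof.
move=> k0; elim: N => [|N IH] /=; first by rewrite div0n.
rewrite IH divnS //; case: ifP => kN /=; last by rewrite add0n; lra.
have := divnK kN; rewrite divnS // kN add1n /= => e.
by rewrite mulnC e.
Qed.

(* The sum of T(|d2 - d1|) over the off-diagonal pairs of [1, H]^2 and the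
   weighted sum 2 sum_h (H - h) T(h) are both twice the sum of the partial
   sums of T; this gives the first identity of the theorem for any T. *)
Definition offdiag_sum (T : nat -> R) (H : nat) : R :=
  sumR (fun d1 => sumR (fun d2 =>
     if eqn d1 d2 then 0 else T (ndist d2 d1)) H) H.

Lemma offdiag_sum_step T H : offdiag_sum T H.+1 = offdiag_sum T H + 2 * sumR T H.
Proof.
have border : forall g : nat -> nat,
    (forall i, (i <= H)%nat -> g i = ndist H.+1 i) ->
    sumR (fun i => if eqn i H.+1 then 0 else T (g i)) H = sumR T H.
  move=> g eg; rewrite -[RHS]sumR_rev; apply: sumR_ext => i /andP[i1 iH].
  have -> : eqn i H.+1 = false by apply/eqnP; lia.
  by rewrite eg //; congr T; rewrite /ndist; lia.
rewrite /offdiag_sum /= sumR_plus border; last by [].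
rewrite (sumR_ext (fun d2 => if eqn H.+1 d2 then 0 else T (ndist d2 H.+1))
                 (fun i => if eqn i H.+1 then 0 else T (ndist H.+1 i))); last first.
  by move=> i _; rewrite /ndist addnC; case: eqnP; case: eqnP => //; lia.
by rewrite border // (_ : eqn H H = true); [lra | apply/eqnP].
Qed.

Lemma offdiag_partial_sums T H :
  offdiag_sum T H.+1 = 2 * sumR (fun N => sumR T N) H.
Proof.
elim: H => [|H IH]; first by rewrite /offdiag_sum /=; lra.
rewrite offdiag_sum_step IH /=; lra.
Qed.

Lemma weighted_partial_sums T H :
  sumR (fun h => INR (H.+1 - h) * T h) H = sumR (fun N => sumR T N) H.
Proof.
elim: H => [|H IH] //=; rewrite -IH subSnn /= Rmult_1_l.
rewrite (sumR_ext _ (fun h => INR (H.+1 - h) * T h + T h)); last first.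
  by move=> i /andP[_ iH]; rewrite subSn ?S_INR; [ring | lia].
rewrite sumR_plus; lra.
Qed.

Lemma pair_sum_weighted d H : pair_sum d H = weighted_sum d H.
Proof.
rewrite /weighted_sum; case: H => [|H]; first by rewrite /pair_sum /=; lra.
rewrite subn1 /= weighted_partial_sums -offdiag_partial_sums //.
Qed.

(* The weights W_{d,p} are built from constant, divisibility
   and geometric sequences, for which this bounded-error property is stable. *)
Definition has_mean (G : nat -> R) (g E : R) : Prop :=
  forall M, Rabs (sumR G M - g * INR M) <= E.

Lemma has_mean_err_nonneg {G g E} : has_mean G g E -> 0 <= E.
Proof. by move=> /(_ 0%nat) /=; rewrite Rmult_0_r Rminus_0_r Rabs_R0. Qed.

Lemma has_mean_one : has_mean (fun _ => 1) 1 0.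
Proof. by move=> M; rewrite sumR_const Rmult_1_l Rminus_diag Rabs_R0; lra. Qed.

Lemma has_mean_lin a b G G' g g' E E' : has_mean G g E -> has_mean G' g' E' ->
  has_mean (fun j => a * G j + b * G' j) (a * g + b * g') (Rabs a * E + Rabs b * E').
Proof.
move=> hG hG' M; rewrite sumR_plus !sumR_scal.
have -> : a * sumR G M + b * sumR G' M - (a * g + b * g') * INR M =
   a * (sumR G M - g * INR M) + b * (sumR G' M - g' * INR M) by ring.
apply: Rle_trans (Rabs_triang _ _) _; rewrite !Rabs_mult.
by apply: Rplus_le_compat; apply: Rmult_le_compat_l; try apply: Rabs_pos.
Qed.

Lemma has_mean_congr G G' g g' E : (forall j, (0 < j)%nat -> G j = G' j) ->
  g = g' -> has_mean G g E -> has_mean G' g' E.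
Proof.
move=> eG <- hG M; rewrite -(sumR_ext G) //.
by move=> i /andP[i1 _]; apply: eG.
Qed.

Lemma INR_gt0 n : (0 < n)%nat -> 0 < INR n.
Proof. by move=> n0; apply: lt_0_INR; apply/ltP. Qed.

Lemma floor_err M K : (0 < K)%nat -> Rabs (INR (M %/ K) - INR M / INR K) <= 1.
Proof.
move=> K0; have hK := INR_gt0 K K0.
have eM : INR M = INR (M %/ K) * INR K + INR (M %% K).
  by rewrite {1}(divn_eq M K) plus_INR mult_INR.
have rK : INR (M %% K) < INR K by apply: lt_INR; apply/ltP; apply: ltn_pmod.
have -> : INR (M %/ K) - INR M / INR K = - (INR (M %% K) / INR K).
  by rewrite eM; field; lra.
rewrite Rabs_Ropp Rabs_pos_eq; last first.
  by apply: Rmult_le_pos; [apply: pos_INR | apply/Rlt_le/Rinv_0_lt_compat].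
apply: (Rmult_le_reg_r (INR K)) => //.
rewrite Rmult_1_l /Rdiv Rmult_assoc Rinv_l ?Rmult_1_r; lra.
Qed.

Lemma has_mean_multiples K G g E : (0 < K)%nat -> (forall i, G (K * i)%nat = G i) ->
  has_mean G g E ->
  has_mean (fun j => if (K %| j)%nat then G j else 0) (g / INR K) (E + Rabs g).
Proof.
move=> K0 GK hG M; rewrite sumR_multiples // (sumR_ext _ G); last by move=> i _; apply: GK.
have -> : sumR G (M %/ K) - g / INR K * INR M =
   (sumR G (M %/ K) - g * INR (M %/ K)) + g * (INR (M %/ K) - INR M / INR K).
  by have hK := INR_gt0 K K0; field; lra.
apply: Rle_trans (Rabs_triang _ _) _; apply: Rplus_le_compat; first exact: hG.
rewrite Rabs_mult -{2}(Rmult_1_r (Rabs g)).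
by apply: Rmult_le_compat_l; [apply: Rabs_pos | apply: floor_err].
Qed.

Lemma logn_prime_mul q i : prime q -> (0 < i)%nat -> logn q (q * i) = (logn q i).+1.
Proof.
move=> pq i0; rewrite lognE pq muln_gt0 prime_gt0 //= i0 dvdn_mulr //.
by rewrite mulKn // prime_gt0.
Qed.

Lemma logn_ndvd q j : ~~ (q %| j)%nat -> logn q j = 0%nat.
Proof. by move=> qj; rewrite lognE (negbTE qj) !andbF. Qed.

Lemma geom_weight_recurrence q G s M : prime q -> (forall i, G (q * i)%nat = G i) ->
  let F := fun j => G j * s ^ logn q j in
  sumR F M = sumR G M - sumR G (M %/ q) + s * sumR F (M %/ q).
Proof.
move=> pq Gq F; have q0 := prime_gt0 pq.
have -> : sumR F M = sumR (fun j => G j - (if (q %| j)%nat then G j else 0)) M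
                    + sumR (fun j => if (q %| j)%nat then F j else 0) M.
  rewrite -sumR_plus; apply: sumR_ext => j _; rewrite /F.
  by case: ifP => qj; [|rewrite logn_ndvd ?qj //=]; lra.
rewrite sumR_minus !sumR_multiples // (sumR_ext _ G); last by move=> i _; apply: Gq.
rewrite (sumR_ext (fun j => F (q * j)%nat) (fun j => s * F j)) ?sumR_scal //.
by move=> i /andP[i1 _]; rewrite /F Gq logn_prime_mul //=; ring.
Qed.

Lemma has_mean_geom q G g E s : prime q -> (forall i, G (q * i)%nat = G i) ->
  has_mean G g E -> 0 <= s < 1 ->
  has_mean (fun j => G j * s ^ logn q j)
    (g * (INR q - 1) / (INR q - s)) ((2 * E + Rabs g) / (1 - s)).
Proof.
move=> pq Gq hG [s0 s1]; have q0 := prime_gt0 pq.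
have q2 : 2 <= INR q by apply: (le_INR 2); apply/leP; apply: prime_gt1.
have E0 := has_mean_err_nonneg hG.
set E' := (2 * E + Rabs g) / (1 - s).
set rho := (1 - s) / (INR q - s).
have rho0 : 0 <= rho.
  by apply: Rmult_le_pos; [lra | apply: Rlt_le; apply: Rinv_0_lt_compat; lra].
have rho1 : rho * (INR q - 1) <= 1.
  apply: (Rmult_le_reg_l (INR q - s)); first lra.
  have -> : (INR q - s) * (rho * (INR q - 1)) = (1 - s) * (INR q - 1)
    by rewrite /rho; field; lra.
  nra.
elim/ltn_ind => M IH.
have [->|M0] := posnP M.
  rewrite /= Rmult_0_r Rminus_0_r Rabs_R0 /E'.
  by apply: Rmult_le_pos; [have := Rabs_pos g; lra | apply: Rlt_le; apply: Rinv_0_lt_compat; lra].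
set M' := (M %/ q)%nat.
have IH' := IH M' (ltn_Pdiv (prime_gt1 pq) M0).
have eM : INR M = INR q * INR M' + INR (M %% q).
  by rewrite {1}(divn_eq M q) plus_INR mult_INR Rmult_comm.
have r0 := pos_INR (M %% q).
have r1 : INR (M %% q) <= INR q - 1.
  have : (M %% q < q)%nat := ltn_pmod M q0.
  by move/leP/le_INR; rewrite S_INR; lra.
rewrite geom_weight_recurrence // -/M'.
set F := fun j => G j * s ^ logn q j.
have -> : sumR G M - sumR G M' + s * sumR F M' - g * (INR q - 1) / (INR q - s) * INR M =
  (sumR G M - g * INR M) - (sumR G M' - g * INR M')
  + s * (sumR F M' - g * (INR q - 1) / (INR q - s) * INR M') + g * (rho * INR (M %% q)).
  by rewrite eM /rho; field; lra.
have hr : Rabs (g * (rho * INR (M %% q))) <= Rabs g.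
  rewrite Rabs_mult -{2}(Rmult_1_r (Rabs g)); apply: Rmult_le_compat_l; first exact: Rabs_pos.
  by rewrite Rabs_pos_eq; nra.
have hs : Rabs (s * (sumR F M' - g * (INR q - 1) / (INR q - s) * INR M')) <= s * E'.
  by rewrite Rabs_mult Rabs_pos_eq //; apply: Rmult_le_compat_l.
have eE' : 2 * E + Rabs g + s * E' = E' by rewrite /E'; field; lra.
have := hG M; have := hG M'.
set a := sumR G M - _; set b := sumR G M' - _; set c := s * _ in hs *; set e := g * _ in hr *.
move=> hb ha; have := Rabs_triang (a - b + c) e; have := Rabs_triang (a - b) c.
have := Rabs_triang a (- b); rewrite Rabs_Ropp -/(Rminus a b); lra.
Qed.

(* Each W_{d,p} is an explicit linear combination of the constant 1, of
   indicators of 2^k | j and of geometric weights p^{-m_p(j)}; the mean values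
   of these building blocks give the mean value of prod_{p in R_d} W_{d,p}. *)
Definition W_mean (d : nat) : R :=
  match d with
  | 1%nat | 2%nat | 3%nat => / 4
  | 4%nat | 7%nat => 9 / 64
  | _ => 0
  end.

Lemma dvd2_logn j : (0 < j)%nat -> (2 %| j)%nat = (1 <= logn 2 j)%nat.
Proof. by move=> j0; rewrite -(pfactor_dvdn 1) ?expn1. Qed.

(* W_{1,2}(j) = 1 - (3/4) 2^{-m_2(j)} - (1/2) [2 | j]. *)
Lemma W12_mean : exists E, has_mean (Wprod 1) (W_mean 1) E.
Proof.
have h1 := has_mean_one.
have h2 := has_mean_multiples 2 (fun _ => 1) _ _ isT (fun i => erefl) h1.
have h3 := has_mean_geom 2 (fun _ => 1) _ _ (/2) isT (fun i => erefl) h1 ltac:(lra).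
have h4 := has_mean_lin 1 (-3/4) _ _ _ _ _ _ h1 h3.
have h5 := has_mean_lin 1 (-1/2) _ _ _ _ _ _ h4 h2.
eexists; apply: (has_mean_congr _ _ _ _ _ _ _ h5).
- move=> j j0 /=; rewrite /W12 /mp dvd2_logn //.
  case: (logn 2 j) => [|v] /=; first by field.
  rewrite !addn1 !addn2 pow_inv /=.
  have v0 : 0 < 2 ^ v by apply: pow_lt; lra.
  field; lra.
- by rewrite /W_mean; simpl INR; field.
Qed.

Lemma dvd4_logn j : (0 < j)%nat -> (4 %| j)%nat = (2 <= logn 2 j)%nat.
Proof. by move=> j0; rewrite -(pfactor_dvdn 2). Qed.

Lemma dvd8_logn j : (0 < j)%nat -> (8 %| j)%nat = (3 <= logn 2 j)%nat.
Proof. by move=> j0; rewrite -(pfactor_dvdn 3). Qed.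

(* W_{2,2}(j) = 7/4 - (3/2) 2^{-m_2(j)} - (3/4) [2 | j] - (1/2) [4 | j]. *)
Lemma W22_mean : exists E, has_mean (Wprod 2) (W_mean 2) E.
Proof.
have h1 := has_mean_one.
have h2 := has_mean_multiples 2 (fun _ => 1) _ _ isT (fun i => erefl) h1.
have h4 := has_mean_multiples 4 (fun _ => 1) _ _ isT (fun i => erefl) h1.
have h3 := has_mean_geom 2 (fun _ => 1) _ _ (/2) isT (fun i => erefl) h1 ltac:(lra).
have hA := has_mean_lin (7/4) (-3/2) _ _ _ _ _ _ h1 h3.
have hB := has_mean_lin 1 (-3/4) _ _ _ _ _ _ hA h2.
have hC := has_mean_lin 1 (-1/2) _ _ _ _ _ _ hB h4.
eexists; apply: (has_mean_congr _ _ _ _ _ _ _ hC).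
- move=> j j0 /=; rewrite /W22 /mp dvd2_logn // dvd4_logn //.
  case: (logn 2 j) => [|[|v]] /=; try by field.
  rewrite !addn1 pow_inv /=.
  have v0 : 0 < 2 ^ v by apply: pow_lt; lra.
  field; lra.
- by rewrite /W_mean; simpl INR; field.
Qed.

(* W_{3,3}(j) = 1/2 - (1/3) 3^{-m_3(j)}. *)
Lemma W33_mean : exists E, has_mean (Wprod 3) (W_mean 3) E.
Proof.
have h1 := has_mean_one.
have h3 := has_mean_geom 3 (fun _ => 1) _ _ (/3) isT (fun i => erefl) h1 ltac:(lra).
have hA := has_mean_lin (1/2) (-1/3) _ _ _ _ _ _ h1 h3.
eexists; apply: (has_mean_congr _ _ _ _ _ _ _ hA).
- move=> j j0 /=; rewrite /W33 /mp.
  case: (logn 3 j) => [|v] /=; first by field.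
  rewrite !addn1 pow_inv /=.
  have v0 : 0 < 3 ^ v by apply: pow_lt; lra.
  field; lra.
- by rewrite /W_mean; simpl INR; field.
Qed.

(* W_{4,2}(j) = 7/8 - (3/4) 2^{-m_2(j)} - (1/2) [2 | j] + (1/8) [4 | j] - (1/8) [8 | j]. *)
Lemma W42_mean : exists E, has_mean (Wprod 4) (W_mean 4) E.
Proof.
have h1 := has_mean_one.
have h2 := has_mean_multiples 2 (fun _ => 1) _ _ isT (fun i => erefl) h1.
have h4 := has_mean_multiples 4 (fun _ => 1) _ _ isT (fun i => erefl) h1.
have h8 := has_mean_multiples 8 (fun _ => 1) _ _ isT (fun i => erefl) h1.
have h3 := has_mean_geom 2 (fun _ => 1) _ _ (/2) isT (fun i => erefl) h1 ltac:(lra).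
have hA := has_mean_lin (7/8) (-3/4) _ _ _ _ _ _ h1 h3.
have hB := has_mean_lin 1 (-1/2) _ _ _ _ _ _ hA h2.
have hC := has_mean_lin 1 (1/8) _ _ _ _ _ _ hB h4.
have hD := has_mean_lin 1 (-1/8) _ _ _ _ _ _ hC h8.
eexists; apply: (has_mean_congr _ _ _ _ _ _ _ hD).
- move=> j j0 /=; rewrite /W42 /mp dvd2_logn // dvd4_logn // dvd8_logn //.
  case: (logn 2 j) => [|[|[|v]]] /=; try by field.
  rewrite !addn2 pow_inv /=.
  have v0 : 0 < 2 ^ v by apply: pow_lt; lra.
  field; lra.
- by rewrite /W_mean; simpl INR; field.
Qed.

(* W_{7,2}(j) W_{7,7}(j) = 1/4 + (1/8) [4 | j] - (1/7) 7^{-m_7(j)}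
   - (1/14) [4 | j] 7^{-m_7(j)}; the last term is a geometric weighting of the
   indicator of 4 | j, which is invariant under multiplication by 7. *)
Lemma W7_mean : exists E, has_mean (Wprod 7) (W_mean 7) E.
Proof.
have h1 := has_mean_one.
have h4 := has_mean_multiples 4 (fun _ => 1) _ _ isT (fun i => erefl) h1.
have hg := has_mean_geom 7 (fun _ => 1) _ _ (/7) isT (fun i => erefl) h1 ltac:(lra).
have inv4 : forall i, (if (4 %| 7 * i)%nat then 1 else 0) = (if (4 %| i)%nat then 1 else 0).
  by move=> i; rewrite Gauss_dvdr.
have h47 := has_mean_geom 7 _ _ _ (/7) isT inv4 h4 ltac:(lra).
have hA := has_mean_lin (1/4) (1/8) _ _ _ _ _ _ h1 h4.
have hB := has_mean_lin 1 (-1/7) _ _ _ _ _ _ hA hg.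
have hC := has_mean_lin 1 (-1/14) _ _ _ _ _ _ hB h47.
eexists; apply: (has_mean_congr _ _ _ _ _ _ _ hC).
- move=> j j0 /=; rewrite /W72 /W77 /mp dvd4_logn //.
  rewrite !addn1 pow_inv /=.
  have v0 : 0 < 7 ^ logn 7 j by apply: pow_lt; lra.
  by case: (logn 2 j) => [|[|v]] /=; field; lra.
- by rewrite /W_mean; simpl INR; field.
Qed.

Lemma Wprod_has_mean d : d = 1%nat \/ d = 2%nat \/ d = 3%nat \/ d = 4%nat \/ d = 7%nat ->
  exists E, has_mean (Wprod d) (W_mean d) E.
Proof.
case=> [->|[->|[->|[->|->]]]];
  [exact: W12_mean | exact: W22_mean | exact: W33_mean | exact: W42_mean | exact: W7_mean].
Qed.

Lemma divisors_pfactor p a m : prime p -> (0 < m)%nat -> coprime p m ->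
  perm_eq (divisors (p ^ a * m))
          [seq (p ^ j * k)%nat | j <- iota 0 a.+1, k <- divisors m].
Proof.
move=> pp m0 pm; have p0 := prime_gt0 pp.
have pa0 : (0 < p ^ a)%nat by rewrite expn_gt0 p0.
have n0 : (0 < p ^ a * m)%nat by rewrite muln_gt0 pa0.
have coprime_div k : k \in divisors m -> (0 < k)%nat /\ coprime p k.
  rewrite -dvdn_divisors // => km; split; first exact: dvdn_gt0 m0 km.
  by apply: coprime_dvdr km pm.
have logn_pk j k : k \in divisors m -> logn p (p ^ j * k) = j.
  case/coprime_div => k0 pk; rewrite mulnC logn_Gauss //.
  by rewrite pfactorK.
apply: uniq_perm; [exact: divisors_uniq | |].
- apply: allpairs_uniq; [exact: iota_uniq | exact: divisors_uniq |].
  move=> [j k] [j' k'] /allpairsP[[x y] [_ hk [-> ->]]]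
                       /allpairsP[[x' y'] [_ hk' [-> ->]]] /= e.
  have ej : x = x' by rewrite -(logn_pk x y) // e logn_pk.
  subst x'; congr pair; apply/eqP.
  by rewrite -(eqn_pmul2l (_ : 0 < p ^ x)%nat) ?e // expn_gt0 p0.
- move=> d; rewrite -dvdn_divisors //; apply/idP/allpairsP => [dn|].
  + have d0 : (0 < d)%nat by exact: dvdn_gt0 n0 dn.
    have [k pk dk] := pfactor_coprime pp d0.
    exists (logn p d, k); split; last by rewrite mulnC.
    * rewrite mem_iota add0n ltnS; have := dvdn_leq_log p n0 dn.
      by rewrite mulnC logn_Gauss // pfactorK.
    * have kpa : coprime k (p ^ a) by rewrite coprime_sym; apply: coprimeXl.
      rewrite -dvdn_divisors // -(Gauss_dvdr _ kpa).
      by apply: dvdn_trans dn; rewrite dk dvdn_mulr.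
  + move=> [[j k] [hj hk ->]]; apply: dvdn_mul.
    * by apply: dvdn_exp2l; move: hj; rewrite mem_iota add0n ltnS.
    * by rewrite dvdn_divisors.
Qed.

Lemma primes_pfactor p a m : prime p -> (0 < a)%nat -> (0 < m)%nat -> coprime p m ->
  perm_eq (primes (p ^ a * m)) (p :: primes m).
Proof.
move=> pp a0 m0 pm; apply: uniq_perm; [exact: primes_uniq | |].
- by rewrite /= primes_uniq andbT mem_primes pp m0 -prime_coprime ?pm.
- move=> q; rewrite primesM ?expn_gt0 ?(prime_gt0 pp) // primesX // primes_prime //.
  by rewrite !inE.
Qed.

Lemma big_Rplus_distr (c : R) (s : seq nat) (F : nat -> R) :
  \big[Rplus/0]_(i <- s) (c * F i) = c * \big[Rplus/0]_(i <- s) F i.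
Proof. by elim: s => [|x s IH]; rewrite ?big_nil ?big_cons ?IH; lra. Qed.

Section MultiplicativeExpansion.

Variable f : nat -> R.
Hypothesis f1 : f 1%nat = 1.
Hypothesis fM : forall a b, (0 < a)%nat -> (0 < b)%nat -> f (a * b)%nat = f a * f b.

Lemma f_expn p j : (0 < p)%nat -> f (p ^ j)%nat = f p ^ j.
Proof.
move=> p0; elim: j => [|j IH]; first by rewrite expn0 f1.
by rewrite expnS fM ?expn_gt0 ?p0 // IH.
Qed.

Lemma divisor_sum_euler_product n : (0 < n)%nat ->
  \big[Rplus/0]_(k <- divisors n) f k =
  \big[Rmult/1]_(p <- primes n) \big[Rplus/0]_(0 <= j < (logn p n).+1) f p ^ j.
Proof.
elim/ltn_ind: n => n IH n0.
have [n1|n_gt1] := leqP n 1.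
  have -> : n = 1%nat by lia.
  by rewrite (_ : divisors 1 = [:: 1%nat]) // big_seq1 (_ : primes 1 = [::]) // big_nil.
set p := pdiv n; have pp : prime p := pdiv_prime n_gt1; have p0 := prime_gt0 pp.
have [m pm dn] := pfactor_coprime pp n0; set a := logn p n in dn.
have m0 : (0 < m)%nat by move: n0; rewrite dn muln_gt0 => /andP[].
have a0 : (0 < a)%nat by rewrite logn_gt0 mem_primes pp n0 pdiv_dvd.
have mn : (m < n)%nat.
  rewrite dn -{1}(muln1 m) ltn_pmul2l // -(expn0 p) ltn_exp2l //; exact: prime_gt1.
rewrite [in LHS]dn mulnC (perm_big _ (divisors_pfactor _ a _ pp m0 pm)).
rewrite (perm_big _ (_ : perm_eq (primes n) (p :: primes m))); last first.
  by rewrite dn mulnC primes_pfactor.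
rewrite big_cons -/a big_allpairs_dep.
under eq_bigr => j _.
  rewrite (eq_big_seq (fun k => f p ^ j * f k)); last first.
    move=> k; rewrite -dvdn_divisors // => /(dvdn_gt0 m0) k0.
    by rewrite fM ?expn_gt0 ?p0 // f_expn.
  rewrite big_Rplus_distr IH //.
  over.
rewrite (eq_big_seq (fun q => \big[Rplus/0]_(0 <= j < (logn q m).+1) f q ^ j)); last first.
  move=> q; rewrite mem_primes => /and3P[pq _ qm].
  have qp : (p == q) = false.
    by apply/negbTE; apply: contraL pm => /eqP ->; rewrite prime_coprime // qm.
  by rewrite dn lognM ?expn_gt0 ?p0 // lognX (logn_prime _ pp) eq_sym qp muln0 addn0.
apply: (eq_trans _ (Rmult_comm _ _)); rewrite -big_Rplus_distr.
by apply: eq_bigr => j _; rewrite Rmult_comm.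
Qed.

End MultiplicativeExpansion.

Definition Qnumber (d k : nat) : bool := all (inQ d) (primes k).

Definition Qrecip (d e k : nat) : R := if Qnumber d k then / INR k ^ e else 0.

Lemma Qnumber_mul d a b : (0 < a)%nat -> (0 < b)%nat ->
  Qnumber d (a * b) = Qnumber d a && Qnumber d b.
Proof.
move=> a0 b0; rewrite /Qnumber -all_cat; apply: eq_all_r => p.
by rewrite primesM // mem_cat.
Qed.

Lemma Qrecip_1 d e : Qrecip d e 1 = 1.
Proof. by rewrite /Qrecip /= pow1 Rinv_1. Qed.

Lemma Qrecip_mul d e a b : (0 < a)%nat -> (0 < b)%nat ->
  Qrecip d e (a * b) = Qrecip d e a * Qrecip d e b.
Proof.
move=> a0 b0; rewrite /Qrecip Qnumber_mul //.
case: (Qnumber d a); case: (Qnumber d b) => /=; try ring.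
by rewrite mult_INR Rpow_mult_distr Rinv_mult.
Qed.

Lemma Qrecip_prime d e p : prime p -> Qrecip d e p = if inQ d p then / INR p ^ e else 0.
Proof. by move=> pp; rewrite /Qrecip /Qnumber primes_prime //= andbT. Qed.

Lemma Qrecip_nonneg d e k : 0 <= Qrecip d e k.
Proof.
rewrite /Qrecip; case: ifP => _; last lra.
case: k => [|k]; first by case: e => [|e] /=; rewrite ?Rmult_0_l ?Rinv_0; lra.
by apply/Rlt_le/Rinv_0_lt_compat/pow_lt; apply: INR_gt0.
Qed.

Lemma Qrecip_le d e k : (1 <= k)%nat -> Qrecip d e k <= / INR k ^ e.
Proof.
move=> k1; rewrite /Qrecip; case: ifP => _; first lra.
by apply/Rlt_le/Rinv_0_lt_compat/pow_lt; apply: INR_gt0.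
Qed.

Lemma Qrecip_2 d k : Qrecip d 2 k = Qrecip d 1 k * / INR k.
Proof. by rewrite /Qrecip; case: ifP => _ /=; [rewrite !Rmult_1_r Rinv_mult | lra]. Qed.

Lemma sorted_filter_iota (P : pred nat) a b : sorted ltn [seq p <- index_iota a b | P p].
Proof. by apply: sorted_filter; [exact: ltn_trans | exact: iota_ltn_sorted]. Qed.

Lemma divisor_sum_as_sumR (F : nat -> R) n N : (0 < n)%nat -> (n <= N)%nat ->
  \big[Rplus/0]_(k <- divisors n) F k = sumR (fun k => if (k %| n)%nat then F k else 0) N.
Proof.
move=> n0 nN; rewrite sumR_big -[RHS]big_mkcond -[RHS]big_filter; congr bigop.
apply: (irr_sorted_eq (leT := ltn) ltn_trans ltnn).
- exact: sorted_divisors_ltn.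
- exact: sorted_filter_iota.
- move=> k; rewrite mem_filter mem_iota -dvdn_divisors //.
  case kn: (k %| n)%nat => //=.
  by have := dvdn_leq n0 kn; have := dvdn_gt0 n0 kn; lia.
Qed.

Lemma prime_prod_as_prodR (g : nat -> R) n N : (0 < n)%nat ->
  (forall p, prime p -> (p %| n)%nat -> (p <= N)%nat) ->
  \big[Rmult/1]_(p <- primes n) g p =
  prodR (fun p => if prime p && (p %| n)%nat then g p else 1) N.
Proof.
move=> n0 bound; rewrite prodR_big -[RHS]big_mkcond -[RHS]big_filter; congr bigop.
apply: (irr_sorted_eq (leT := ltn) ltn_trans ltnn).
- exact: sorted_primes.
- exact: sorted_filter_iota.
- move=> p; rewrite mem_filter mem_iota mem_primes n0 /=.
  case pp: (prime p) => //=; case pn: (p %| n)%nat => //=.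
  by have := bound p pp pn; have := prime_gt0 pp; lia.
Qed.

Lemma geom_sum x n : x <> 1 -> \big[Rplus/0]_(0 <= j < n) x ^ j = (1 - x ^ n) / (1 - x).
Proof.
move=> x1; elim: n => [|n IH]; first by rewrite big_geq //=; field; lra.
by rewrite big_nat_recr //= IH; field; lra.
Qed.

Lemma Qrecip_local_factor d e p a : prime p -> (0 < e)%nat ->
  \big[Rplus/0]_(0 <= j < a.+1) Qrecip d e p ^ j =
  if inQ d p then (1 - (/ INR p ^ e) ^ a.+1) / (1 - / INR p ^ e) else 1.
Proof.
move=> pp e0; rewrite Qrecip_prime //.
have p2 : 1 < INR p by apply: (lt_INR 1); apply/ltP; apply: prime_gt1.
case: (inQ d p).
- have pe : 1 < INR p ^ e by apply: Rlt_pow_R1 => //; apply/ltP.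
  have : / INR p ^ e < 1 by rewrite -Rinv_1; apply: Rinv_lt_contravar; lra.
  by move=> lt1; rewrite geom_sum //; lra.
- rewrite big_nat_recl // big1 /=; first lra.
  by move=> i _; rewrite /= Rmult_0_l.
Qed.

Lemma Qrecip_divisor_sum d e n N : (0 < n)%nat -> (0 < e)%nat ->
  (forall p, prime p -> (p %| n)%nat -> (p <= N)%nat) ->
  \big[Rplus/0]_(k <- divisors n) Qrecip d e k =
  prodR (fun p => if [&& prime p, inQ d p & p %| n]%nat
                  then (1 - (/ INR p ^ e) ^ (logn p n).+1) / (1 - / INR p ^ e) else 1) N.
Proof.
move=> n0 e0 bound.
rewrite (divisor_sum_euler_product _ (Qrecip_1 d e) (Qrecip_mul d e)) //.
rewrite (prime_prod_as_prodR _ n N) //; apply: prodR_ext => p _.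
case pp: (prime p) => //=; case: (p %| n)%nat; rewrite ?andbF ?andbT //=.
by rewrite Qrecip_local_factor //; case: inQ.
Qed.

Lemma Qprod_divisor_sum d h : (0 < h)%nat ->
  Qprod d h = \big[Rplus/0]_(k <- divisors h) Qrecip d 1 k.
Proof.
move=> h0; rewrite (Qrecip_divisor_sum d 1 h h) //; last by move=> p _; apply: dvdn_leq.
apply: prodR_ext => p _; case: ifP => // _.
by rewrite /mp pow_1 pow_inv addn1.
Qed.

Lemma logn_Qnumber_mul d k j q : (0 < k)%nat -> Qnumber d k -> prime q -> inQ d q = false ->
  logn q (k * j) = logn q j.
Proof.
move=> k0 hk pq qQ; apply: logn_Gauss; rewrite prime_coprime //.
apply: contraFN qQ => qk; move/allP: hk; apply.
by rewrite mem_primes pq k0.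
Qed.

(* Hence W_{d,p} (p in R_d, disjoint from Q_d) is invariant under Q_d-dilations. *)
Lemma Wprod_Qnumber_mul d k j : (0 < k)%nat -> Qnumber d k -> Wprod d (k * j) = Wprod d j.
Proof.
move=> k0 hk.
case: d hk => [|[|[|[|[|[|[|[|d]]]]]]]] hk //=;
  rewrite ?/W12 ?/W22 ?/W33 ?/W42 ?/W72 ?/W77 /mp ?(logn_Qnumber_mul _ _ j 2 k0 hk)
    ?(logn_Qnumber_mul _ _ j 3 k0 hk) ?(logn_Qnumber_mul _ _ j 7 k0 hk) //.
Qed.

(* Hyperbola identity: expanding Q(h) as a divisor sum and exchanging sums,
   sum_{h <= N} W(h) Q(h) = sum_{k <= N} Qrecip(k) sum_{j <= N/k} W(j). *)
Lemma Qprod_weighted_sum (W : nat -> R) d N :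
  (forall k j, (0 < k)%nat -> Qnumber d k -> W (k * j)%nat = W j) ->
  sumR (fun h => W h * Qprod d h) N = sumR (fun k => Qrecip d 1 k * sumR W (N %/ k)) N.
Proof.
move=> Winv.
rewrite (sumR_ext _ (fun h => sumR (fun k =>
           if (k %| h)%nat then W h * Qrecip d 1 k else 0) N)); last first.
  move=> h /andP[h1 hN]; rewrite Qprod_divisor_sum // (divisor_sum_as_sumR _ h N) //.
  by rewrite -sumR_scal; apply: sumR_ext => k _; case: ifP => _; lra.
rewrite sumR_exchange; apply: sumR_ext => k /andP[k1 _].
rewrite (sumR_ext _ (fun h => Qrecip d 1 k * (if (k %| h)%nat then W h else 0))); last first.
  by move=> h _; case: ifP => _; lra.
rewrite sumR_scal sumR_multiples //.
rewrite /Qrecip; case kQ: (Qnumber d k); last lra.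
by congr Rmult; apply: sumR_ext => j _; apply: Winv.
Qed.

Definition Qzeta (d N : nat) : R := sumR (Qrecip d 2) N.
Definition harmonic (N : nat) : R := sumR (fun k => / INR k) N.

Lemma inv_sq_le_telescope n : (1 <= n)%nat -> / INR n.+1 ^ 2 <= / INR n - / INR n.+1.
Proof.
move=> n1; have n0 := INR_gt0 n n1; rewrite S_INR.
have -> : / INR n - / (INR n + 1) = / (INR n * (INR n + 1)) by field; lra.
by apply: Rinv_le_contravar; [nra | simpl; nra].
Qed.

Lemma Qzeta_tail d N M : (1 <= N)%nat -> (N <= M)%nat ->
  Qzeta d M - Qzeta d N <= / INR N - / INR M.
Proof.
move=> N1; elim: M => [|M IH] NM; first lia.
have [<-|NM'] : M.+1 = N \/ (N <= M)%nat by lia.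
  lra.
have := IH NM'; have := Qrecip_le d 2 M.+1 isT.
have := inv_sq_le_telescope M (leq_trans N1 NM').
rewrite /Qzeta /=; lra.
Qed.

Lemma Qzeta_growing d : Un_growing (Qzeta d).
Proof. by move=> n; rewrite /Qzeta /=; have := Qrecip_nonneg d 2 n.+1; lra. Qed.

Lemma Qzeta_bounded d : has_ub (Qzeta d).
Proof.
exists 2 => _ [[|n] ->]; first by rewrite /Qzeta /=; lra.
have := Qzeta_tail d 1 n.+1 isT isT; have := INR_gt0 n.+1 isT.
have : 0 < / INR n.+1 by apply/Rinv_0_lt_compat/INR_gt0.
by rewrite /Qzeta /= Qrecip_1; lra.
Qed.

Lemma cv_le (u : nat -> R) l b N0 : Un_cv u l ->
  (forall n, (N0 <= n)%nat -> u n <= b) -> l <= b.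
Proof.
move=> hu hb; apply: Rnot_lt_le => hl.
have [N hN] := hu (l - b) ltac:(lra).
have := hN (maxn N N0) ltac:(apply/leP; lia); have := hb (maxn N N0) ltac:(lia).
rewrite /R_dist => h1 /Rabs_def2; lra.
Qed.

Lemma Qzeta_limit_bounds d Z N : Un_cv (Qzeta d) Z -> (1 <= N)%nat ->
  Qzeta d N <= Z /\ Z - Qzeta d N <= / INR N.
Proof.
move=> hZ N1; split; first exact: growing_ineq (Qzeta_growing d) hZ N.
suff : Z <= Qzeta d N + / INR N by lra.
apply: (cv_le _ _ _ N hZ) => n Nn; have := Qzeta_tail d N n N1 Nn.
have : 0 <= / INR n by apply/Rlt_le/Rinv_0_lt_compat/INR_gt0; lia.
lra.
Qed.

Lemma ln_le x y : 0 < x -> x <= y -> ln x <= ln y.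
Proof. by move=> x0 /Rle_lt_or_eq_dec [xy|<-]; [apply/Rlt_le/ln_increasing | lra]. Qed.

(* 1/(N+1) <= ln(N+1) - ln N, from 1 - t <= e^{-t}. *)
Lemma inv_le_log_diff N : (1 <= N)%nat -> / INR N.+1 <= ln (INR N.+1) - ln (INR N).
Proof.
move=> N1; have N0 := INR_gt0 N N1; rewrite S_INR.
have e := exp_ineq1_le (- / (INR N + 1)).
rewrite (_ : 1 + - / (INR N + 1) = INR N / (INR N + 1)) in e; last by field; lra.
have : ln (INR N / (INR N + 1)) <= - / (INR N + 1).
  rewrite -[X in _ <= X]ln_exp; apply: ln_le => //.
  by apply: Rdiv_lt_0_compat; lra.
by rewrite /Rdiv ln_mult ?ln_Rinv; try lra; apply: Rinv_0_lt_compat; lra.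
Qed.

Lemma harmonic_le_log N : (1 <= N)%nat -> harmonic N <= 1 + ln (INR N).
Proof.
elim: N => [|N IH] // _; have [->|N1] := posnP N.
  by rewrite /harmonic /= ln_1 Rinv_1; lra.
by have := IH N1; have := inv_le_log_diff N N1; rewrite /harmonic /=; lra.
Qed.

Lemma sumR_harmonic_bound (a : nat -> R) c N :
  (forall k, (1 <= k <= N)%nat -> Rabs (a k) <= c * / INR k) ->
  Rabs (sumR a N) <= c * harmonic N.
Proof.
by move=> ha; apply: Rle_trans (sumR_abs a N) _; rewrite /harmonic -sumR_scal; apply: sumR_le.
Qed.

Lemma WQ_partial_sums d W w E Z : has_mean W w E ->
  (forall k j, (0 < k)%nat -> Qnumber d k -> W (k * j)%nat = W j) ->
  Un_cv (Qzeta d) Z -> forall N, (1 <= N)%nat ->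
  Rabs (sumR (fun h => W h * Qprod d h) N - w * Z * INR N)
    <= (E + Rabs w) * harmonic N + Rabs w.
Proof.
move=> hW Winv hZ N N1; have E0 := has_mean_err_nonneg hW; have N0 := INR_gt0 N N1.
set s1 := sumR (fun k => Qrecip d 1 k * (sumR W (N %/ k) - w * INR (N %/ k))) N.
set s2 := sumR (fun k => Qrecip d 1 k * (INR (N %/ k) - INR N / INR k)) N.
rewrite Qprod_weighted_sum //.
have -> : sumR (fun k => Qrecip d 1 k * sumR W (N %/ k)) N =
          s1 + w * s2 + w * INR N * Qzeta d N.
  rewrite /s1 /s2 /Qzeta -!sumR_scal -!sumR_plus; apply: sumR_ext => k /andP[k1 _].
  by rewrite Qrecip_2; have k0 := INR_gt0 k k1; field; lra.
have b1 : Rabs s1 <= E * harmonic N.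
  apply: sumR_harmonic_bound => k /andP[k1 _].
  rewrite Rabs_mult Rabs_pos_eq; last exact: Qrecip_nonneg.
  rewrite Rmult_comm.
  have := Qrecip_le d 1 k k1; rewrite pow_1 => hk.
  apply: Rmult_le_compat => //; [exact: Rabs_pos | exact: Qrecip_nonneg].
have b2 : Rabs s2 <= 1 * harmonic N.
  apply: sumR_harmonic_bound => k /andP[k1 _].
  rewrite Rabs_mult Rabs_pos_eq; last exact: Qrecip_nonneg.
  rewrite Rmult_comm.
  have := Qrecip_le d 1 k k1; rewrite pow_1 => hk.
  apply: Rmult_le_compat => //; [exact: Rabs_pos | exact: Qrecip_nonneg | exact: floor_err].
have b3 : Rabs (w * (INR N * (Qzeta d N - Z))) <= Rabs w.
  have [z1 z2] := Qzeta_limit_bounds d Z N hZ N1.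
  rewrite Rabs_mult -{2}(Rmult_1_r (Rabs w)); apply: Rmult_le_compat_l; first exact: Rabs_pos.
  rewrite Rabs_mult Rabs_pos_eq; last lra.
  rewrite Rabs_minus_sym Rabs_pos_eq; last lra.
  apply: (Rle_trans _ (INR N * / INR N)); first by apply: Rmult_le_compat_l; lra.
  by rewrite Rinv_r; lra.
have b2w : Rabs (w * s2) <= Rabs w * harmonic N.
  by rewrite Rabs_mult; apply: Rmult_le_compat_l; [exact: Rabs_pos | lra].
have -> : s1 + w * s2 + w * INR N * Qzeta d N - w * Z * INR N =
          s1 + w * s2 + w * (INR N * (Qzeta d N - Z)) by ring.
have := Rabs_triang (s1 + w * s2) (w * (INR N * (Qzeta d N - Z))).
have := Rabs_triang s1 (w * s2); lra.
Qed.

(* Partial Euler products prod_{p <= N, p in Q_d} (1 - p^{-2})^{-1}; they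
   converge to Z_d = lim Qzeta d (the Euler product of Qrecip d 2). *)
Definition Qeuler (d N : nat) : R :=
  prodR (fun p => if prime p && inQ d p then / (1 - / INR p ^ 2) else 1) N.

Lemma prodR_nonneg f N : (forall i, (1 <= i <= N)%nat -> 0 <= f i) -> 0 <= prodR f N.
Proof.
elim: N => [|N IH] f0 /=; first lra.
apply: Rmult_le_pos; last by apply: f0; rewrite leqnn.
by apply: IH => i hi; apply: f0; lia.
Qed.

Lemma prodR_compare f g c N : 0 <= c ->
  (forall i, (1 <= i <= N)%nat -> 0 <= g i /\ c * g i <= f i) ->
  c ^ N * prodR g N <= prodR f N.
Proof.
move=> c0; elim: N => [|N IH] fg /=; first lra.
have fgN : forall i, (1 <= i <= N)%nat -> 0 <= g i /\ c * g i <= f i.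
  by move=> i hi; apply: fg; lia.
have [gN cgN] := fg N.+1 ltac:(by rewrite leqnn).
have gp : 0 <= prodR g N by apply: prodR_nonneg => i /fgN [].
have cN : 0 <= c ^ N by apply: pow_le.
rewrite (_ : c * c ^ N * (prodR g N * g N.+1) = (c ^ N * prodR g N) * (c * g N.+1));
  last ring.
by apply: Rmult_le_compat => //; [apply: Rmult_le_pos | apply: Rmult_le_pos | apply: IH].
Qed.

Lemma prime_dvd_fact_le p N : prime p -> (p %| N`!)%nat -> (p <= N)%nat.
Proof.
move=> pp; elim: N => [|N IH]; first by rewrite fact0 dvdn1 => /eqP p1; rewrite p1 in pp.
rewrite factS Euclid_dvdM // => /orP[/dvdn_leq //|/IH]; lia.
Qed.

Lemma inv_prime_sq_bounds p : prime p -> 0 < / INR p ^ 2 <= / 4.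
Proof.
move=> pp; have p2 : 2 <= INR p by apply: (le_INR 2); apply/leP; apply: prime_gt1.
split; first by apply/Rinv_0_lt_compat/pow_lt; lra.
by apply: Rinv_le_contravar; [lra | simpl; nra].
Qed.

Lemma Qeuler_nonneg d N : 0 <= Qeuler d N.
Proof.
apply: prodR_nonneg => i _; case: ifP => [/andP[pi _]|_]; last lra.
by have [x0 x1] := inv_prime_sq_bounds i pi; apply/Rlt_le/Rinv_0_lt_compat; lra.
Qed.

Lemma Qrecip2_divisor_sum d n N : (0 < n)%nat ->
  (forall p, prime p -> (p %| n)%nat = (p <= N)%nat) ->
  \big[Rplus/0]_(k <- divisors n) Qrecip d 2 k =
  prodR (fun p => if prime p && inQ d p
                  then (1 - (/ INR p ^ 2) ^ (logn p n).+1) * / (1 - / INR p ^ 2) else 1) N.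
Proof.
move=> n0 dvd_iff; rewrite (Qrecip_divisor_sum d 2 n N) //; last first.
  by move=> p pp; rewrite dvd_iff.
apply: prodR_ext => p /andP[_ pN]; case pp: (prime p) => //=.
by rewrite dvd_iff // pN andbT.
Qed.

Lemma prime_dvd_fact_pow p N J : prime p -> (0 < J)%nat ->
  (p %| N`! ^ J)%nat = (p <= N)%nat.
Proof.
move=> pp J0; rewrite Euclid_dvdX // J0 andbT.
apply/idP/idP => [|pN]; first exact: prime_dvd_fact_le.
by apply: dvdn_fact; rewrite prime_gt0.
Qed.

(* Every k <= N divides N!, so Qzeta d N is at most the divisor sum over N!,
   a truncation of Qeuler d N. *)
Lemma Qzeta_le_Qeuler d N : (1 <= N)%nat -> Qzeta d N <= Qeuler d N.
Proof.
move=> N1; set L := N`!; have L0 : (0 < L)%nat := fact_gt0 N.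
have -> : Qzeta d N = sumR (fun k => if (k %| L)%nat then Qrecip d 2 k else 0) N.
  by apply: sumR_ext => k /andP[k1 kN]; rewrite dvdn_fact ?k1.
apply: Rle_trans (_ : _ <= sumR (fun k => if (k %| L)%nat then Qrecip d 2 k else 0) L) _.
  apply: sumR_range_mono; first exact: fact_geq.
  by move=> k; case: ifP => _; [exact: Qrecip_nonneg | lra].
rewrite -divisor_sum_as_sumR // (Qrecip2_divisor_sum d L N) //; last first.
  by move=> p pp; rewrite -(expn1 L) prime_dvd_fact_pow.
rewrite -[X in X <= _]Rmult_1_l -[X in X * prodR _ _ <= _](pow1 N).
apply: prodR_compare; first lra.
move=> p _; rewrite Rmult_1_l; case: ifP => [/andP[pp _]|_]; last by split; lra.
have [x0 x1] := inv_prime_sq_bounds p pp; set x := / INR p ^ 2 in x0 x1 *.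
have xa : 0 <= x ^ (logn p L).+1 by apply: pow_le; lra.
have ix : 0 < / (1 - x) by apply: Rinv_0_lt_compat; lra.
split; [apply: Rmult_le_pos | rewrite -{2}(Rmult_1_l (/ (1 - x))); apply: Rmult_le_compat_r];
  try lra.
have : x ^ (logn p L).+1 <= 1 by rewrite -(pow1 (logn p L).+1); apply: pow_incr; lra.
lra.
Qed.

Lemma pow_antimono x m n : 0 <= x <= 1 -> (m <= n)%nat -> x ^ n <= x ^ m.
Proof.
move=> x01; elim: n => [|n IH] mn.
  have -> : m = 0%nat by lia.
  lra.
have [->|mn'] : m = n.+1 \/ (m <= n)%nat by lia.
  lra.
have := IH mn'; have : 0 <= x ^ n by apply: pow_le; lra.
by rewrite /=; nra.
Qed.

Lemma bernoulli_ineq x N : 0 <= x <= 1 -> 1 - INR N * x <= (1 - x) ^ N.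
Proof.
move=> x01; elim: N => [|N IH]; first by simpl; lra.
rewrite S_INR /=; have := pos_INR N.
have := Rmult_le_compat_l (1 - x) _ _ ltac:(lra) IH; nra.
Qed.

(* Truncating the Euler product at exponents >= J costs a factor
   (1 - 2^{-J})^N >= 1 - N 2^{-J}: the truncated product is a divisor sum of
   Qrecip d 2 over N!^J, hence at most Z. *)
Lemma Qeuler_truncated_le d Z N J : Un_cv (Qzeta d) Z -> (1 <= J)%nat ->
  (1 - INR N * (/ 2) ^ J) * Qeuler d N <= Z.
Proof.
move=> hZ J1; set L := (N`! ^ J)%nat; set delta := (/ 2) ^ J.
have L0 : (0 < L)%nat by rewrite expn_gt0 fact_gt0.
have delta01 : 0 <= delta <= / 2.
  split; first by apply: pow_le; lra.
  by have := pow_antimono (/ 2) 1 J ltac:(lra) J1; rewrite /= Rmult_1_r.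
have divsum_le : \big[Rplus/0]_(k <- divisors L) Qrecip d 2 k <= Z.
  rewrite (divisor_sum_as_sumR _ L L) //.
  apply: Rle_trans (growing_ineq _ _ (Qzeta_growing d) hZ L).
  by apply: sumR_le => k _; case: ifP => _; [lra | exact: Qrecip_nonneg].
rewrite (Qrecip2_divisor_sum d L N) // in divsum_le; last first.
  by move=> p pp; rewrite prime_dvd_fact_pow.
apply: Rle_trans divsum_le.
apply: Rle_trans (_ : (1 - delta) ^ N * Qeuler d N <= _).
  by apply: Rmult_le_compat_r; [exact: Qeuler_nonneg | apply: bernoulli_ineq; lra].
apply: prodR_compare; first lra.
move=> p /andP[p1 pN]; case: ifP => [/andP[pp _]|_]; last by split; lra.
have [x0 x1] := inv_prime_sq_bounds p pp; set x := / INR p ^ 2 in x0 x1 *.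
have ix : 0 < / (1 - x) by apply: Rinv_0_lt_compat; lra.
have JlogL : (J <= logn p L)%nat.
  rewrite /L lognX; have : (0 < logn p N`!)%nat.
    by rewrite logn_gt0 mem_primes pp fact_gt0 dvdn_fact ?prime_gt0.
  nia.
have : x ^ (logn p L).+1 <= delta.
  apply: Rle_trans (pow_antimono x J (logn p L).+1 ltac:(lra) ltac:(lia)) _.
  by apply: pow_incr; lra.
by split; [lra | rewrite /Rdiv; apply: Rmult_le_compat_r; lra].
Qed.

(* Letting J -> oo in the truncation bound. *)
Lemma Qeuler_le_limit d Z N : Un_cv (Qzeta d) Z -> Qeuler d N <= Z.
Proof.
move=> hZ; apply: Rnot_lt_le => ZE; have E0 := Qeuler_nonneg d N.
set eps := (Qeuler d N - Z) / (INR N * Qeuler d N + 1).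
have eps0 : 0 < eps by apply: Rdiv_lt_0_compat; [lra | have := pos_INR N; nra].
have [J hJ] := pow_lt_1_zero (/ 2) ltac:(rewrite Rabs_pos_eq; lra) eps eps0.
have := hJ J.+1 ltac:(apply/leP; lia); rewrite Rabs_pos_eq; last by apply: pow_le; lra.
move=> small; have := Qeuler_truncated_le d Z N J.+1 hZ isT.
have NE0 : 0 <= INR N * Qeuler d N by have := pos_INR N; nra.
have : INR N * Qeuler d N * (/ 2) ^ J.+1 <= INR N * Qeuler d N * eps.
  by apply: Rmult_le_compat_l; lra.
have : (INR N * Qeuler d N + 1) * eps = Qeuler d N - Z by rewrite /eps; field; lra.
lra.
Qed.

(* Squeezed between Qzeta d N and Z, the Euler product converges to Z. *)
Lemma Qeuler_cv d Z : Un_cv (Qzeta d) Z -> Un_cv (Qeuler d) Z.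
Proof.
move=> hZ eps eps0; have [N hN] := hZ eps eps0.
exists (maxn N 1) => n /leP nN; have n1 : (1 <= n)%nat by lia.
have := hN n ltac:(apply/leP; lia); rewrite /R_dist => /Rabs_def2 close.
have := Qzeta_le_Qeuler d n n1; have := Qeuler_le_limit d Z n hZ.
by move=> h1 h2; rewrite Rabs_left1; lra.
Qed.

(* g_d^2 omits the factor (1 - 2^{-2})^{-1} = 4/3, present in Qeuler d exactly
   when 2 lies in Q_d (that is, for d = 3). *)
Definition kappa (d : nat) : R := if inQ d 2 then 3 / 4 else 1.

Lemma g2_partial_Qeuler d N : (2 <= N)%nat -> g2_partial d N = kappa d * Qeuler d N.
Proof.
move=> N2; rewrite /g2_partial /Qeuler !prodR_big (bigD1_seq 2%nat) ?iota_uniq //=; last first.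
  by rewrite mem_iota; lia.
rewrite [in RHS](bigD1_seq 2%nat) ?iota_uniq //=; last by rewrite mem_iota; lia.
rewrite (eq_bigr (fun p => if prime p && inQ d p then / (1 - / INR p ^ 2) else 1)).
  set P := \big[Rmult/1]_(1 <= i < N.+1 | i != 2%nat) _.
  by rewrite /kappa; case: (inQ d 2); simpl INR; field.
move=> p p2; case pp: (prime p) => //=.
by case: (even_prime pp) p2 => [->|->].
Qed.

Lemma g2_partial_cv d Z : Un_cv (Qzeta d) Z -> Un_cv (g2_partial d) (kappa d * Z).
Proof.
move=> hZ eps eps0; have [N hN] := Qeuler_cv d Z hZ eps eps0.
have k01 : 0 < kappa d <= 1 by rewrite /kappa; case: inQ; lra.
exists (maxn N 2) => n /leP nN; rewrite g2_partial_Qeuler; last lia.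
have := hN n ltac:(apply/leP; lia); rewrite /R_dist.
move=> close; rewrite -Rmult_minus_distr_l Rabs_mult (Rabs_pos_eq (kappa d)); last lra.
by have := Rabs_pos (Qeuler d n - Z); nra.
Qed.

(* If S_T(N) = A N + O(1 + ln N), summing gives the off-diagonal sum
   2 sum_{N < H} S_T(N) = A H^2 + O(H ln H), and ln H <= H^eps / eps turns the
   error into O_eps(H^{1+eps}). *)
Lemma offdiag_sum_asymptotic (T : nat -> R) A B eps : 0 <= B -> 0 < eps ->
  (forall N, (1 <= N)%nat -> Rabs (sumR T N - A * INR N) <= B * (1 + ln (INR N))) ->
  exists C, forall H, (1 <= H)%nat ->
    Rabs (offdiag_sum T H - A * INR H ^ 2) <= C * Rpower (INR H) (1 + eps).
Proof.
move=> B0 eps0 hT; exists (2 * B + 2 * B / eps + Rabs A) => [[|n]] // _.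
set x := INR n.+1; have x1 : 1 <= x by rewrite /x S_INR; have := pos_INR n; lra.
have lnx0 : 0 <= ln x by rewrite -ln_1; apply: ln_le; lra.
have err : Rabs (sumR (fun N => sumR T N - A * INR N) n) <= INR n * (B * (1 + ln x)).
  apply: Rle_trans (sumR_abs _ n) _; rewrite Rmult_comm -sumR_const.
  apply: sumR_le => N /andP[N1 Nn].
  apply: Rle_trans (hT N N1) _; apply: Rmult_le_compat_l => //.
  suff : ln (INR N) <= ln x by lra.
  by apply: ln_le; [apply: INR_gt0 | apply: le_INR; apply/leP; lia].
have sum_linear : sumR (fun N => A * INR N) n = A * (INR n * (INR n + 1) / 2).
  elim: (n) => [|m IH]; first by simpl; lra.
  rewrite (_ : sumR _ m.+1 = sumR (fun N => A * INR N) m + A * INR m.+1) //.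
  by rewrite IH S_INR; field.
have -> : offdiag_sum T n.+1 - A * x ^ 2 =
          2 * sumR (fun N => sumR T N - A * INR N) n - A * x.
  rewrite offdiag_partial_sums sumR_minus sum_linear /x S_INR.
  by set S := sumR (sumR T) n; field.
have xe : 1 <= Rpower x eps.
  by rewrite /Rpower; have := exp_ineq1_le (eps * ln x); nra.
have lne : ln x <= Rpower x eps / eps.
  apply: (Rmult_le_reg_l eps) => //; rewrite /Rpower.
  have -> : eps * (exp (eps * ln x) / eps) = exp (eps * ln x) by field; lra.
  by have := exp_ineq1_le (eps * ln x); lra.
rewrite Rpower_plus Rpower_1; last lra.
have nx : INR n <= x by rewrite /x S_INR; lra.
apply: Rle_trans (Rabs_triang _ _) _.
rewrite Rabs_Ropp !Rabs_mult (Rabs_pos_eq 2) ?(Rabs_pos_eq x); try lra.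
set R := Rpower x eps in xe lne *.
have h1 : 2 * Rabs (sumR (fun N => sumR T N - A * INR N) n) <= 2 * x * (B + B * ln x).
  have Bl : 0 <= B * (1 + ln x) by nra.
  by have := Rmult_le_compat_r _ _ _ Bl nx; lra.
have h2 : B + B * ln x <= (B + B / eps) * R.
  have := Rmult_le_compat_l _ _ _ B0 lne; have : B <= B * R by nra.
  by rewrite /Rdiv; lra.
have h3 : 2 * x * (B + B * ln x) <= 2 * x * ((B + B / eps) * R).
  by apply: Rmult_le_compat_l; lra.
have : Rabs A * x <= Rabs A * (x * R).
  by apply: Rmult_le_compat_l; [exact: Rabs_pos | nra].
lra.
Qed.

Lemma Tsing_partial_sums d w E Z : has_mean (Wprod d) w E -> Un_cv (Qzeta d) Z ->
  forall N, (1 <= N)%nat ->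
  Rabs (sumR (Tsing d) N - c_const d * w * Z * INR N)
    <= Rabs (c_const d) * (E + 2 * Rabs w) * (1 + ln (INR N)).
Proof.
move=> hW hZ N N1; have E0 := has_mean_err_nonneg hW.
have lnN : 0 <= ln (INR N).
  by rewrite -ln_1; apply: ln_le; [lra | apply: (le_INR 1); apply/leP].
have -> : sumR (Tsing d) N = c_const d * sumR (fun h => Wprod d h * Qprod d h) N.
  by rewrite -sumR_scal; apply: sumR_ext => h _; rewrite /Tsing Rmult_assoc.
set S := sumR (fun h => Wprod d h * Qprod d h) N.
have -> : c_const d * S - c_const d * w * Z * INR N = c_const d * (S - w * Z * INR N) by ring.
rewrite Rabs_mult (Rmult_assoc (Rabs _)); apply: Rmult_le_compat_l; first exact: Rabs_pos.
apply: Rle_trans (WQ_partial_sums _ _ _ _ _ hW (Wprod_Qnumber_mul d) hZ N N1) _.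
have := harmonic_le_log N N1; have := Rabs_pos w; nra.
Qed.

Lemma beta_sq d G : 0 <= G -> 0 <= 2 * INR d * L1 d / (PI * INR (totient (2 * d))) ->
  beta d G ^ 2 = delta_const d ^ 2 * G * (2 * INR d * L1 d / (PI * INR (totient (2 * d)))).
Proof. by move=> G0 X0; rewrite /beta !Rpow_mult_distr !pow2_sqrt. Qed.

Lemma beta_sq_eq d Z : d = 1%nat \/ d = 2%nat \/ d = 3%nat \/ d = 4%nat \/ d = 7%nat ->
  0 <= Z -> beta d (kappa d * Z) ^ 2 = c_const d * W_mean d * Z.
Proof.
move=> hd Z0; have pi0 := PI_RGT_0.
have s2 : 0 < sqrt 2 by apply: sqrt_lt_R0; lra.
have s3 : 0 < sqrt 3 by apply: sqrt_lt_R0; lra.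
have s7 : 0 < sqrt 7 by apply: sqrt_lt_R0; lra.
case: hd => [->|[->|[->|[->|->]]]]; rewrite beta_sq //.
all: rewrite ?[totient _]/= /kappa /delta_const /L1 /c_const /W_mean /=; try lra.
all: try by apply/Rlt_le/Rdiv_lt_0_compat; [apply: Rmult_lt_0_compat;
             [lra | apply: Rdiv_lt_0_compat; lra] | lra].
all: field_simplify_eq; try lra.
all: by rewrite pow2_sqrt; lra.
Qed.

Theorem theorem6p2 (d : nat)
  (hd : d = 1%nat \/ d = 2%nat \/ d = 3%nat \/ d = 4%nat \/ d = 7%nat) :
  (forall H : nat, pair_sum d H = weighted_sum d H) /\
  exists G : R, Un_cv (g2_partial d) G /\
    forall eps : R, 0 < eps ->
      exists (C : R) (H0 : nat), forall H : nat, (1 <= H)%nat -> (H0 <= H)%nat ->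
        Rabs (pair_sum d H - (beta d G) ^ 2 * (INR H) ^ 2)
          <= C * Rpower (INR H) (1 + eps).
Proof.
split; first exact: pair_sum_weighted.
have [E hW] := Wprod_has_mean d hd.
have [Z hZ] := growing_cv _ (Qzeta_growing d) (Qzeta_bounded d).
have Z0 : 0 <= Z by have := growing_ineq _ _ (Qzeta_growing d) hZ 0; rewrite /Qzeta /=.
exists (kappa d * Z); split; first exact: g2_partial_cv.
move=> eps eps0; rewrite beta_sq_eq //.
have B0 : 0 <= Rabs (c_const d) * (E + 2 * Rabs (W_mean d)).
  have := has_mean_err_nonneg hW; have := Rabs_pos (c_const d); have := Rabs_pos (W_mean d).
  nra.
have [C hC] := offdiag_sum_asymptotic _ _ _ _ B0 eps0 (Tsing_partial_sums _ _ _ _ hW hZ).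
by exists C, 0%nat => H H1 _; apply: hC.
Qed.
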